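(* Let $A\in\mathbb{R}^{n\times n}$, $B\in\mathbb{R}^{n\times m}$, $N\geq1$ an integer, $\Omega=\{x\in\mathbb{R}^n: Hx\leq h\}$ with $H\in\mathbb{R}^{n_h\times n}$, $X=\{y\in\mathbb{R}^n: Fy\leq f\}$ with $F\in\mathbb{R}^{n_f\times n}$, and $U=\{v\in\mathbb{R}^m: Gv\leq g\}$ with $G\in\mathbb{R}^{n_g\times m}$. Suppose $0\in\Omega$, $0\in X$, $0\in U$. For $k\geq1$ let $Q_k^x(\Omega,U,X)$ be the set of $x\in X$ for which there exist inputs $w_0,\dots,w_{k-1}\in U$ such that the trajectory $x_0=x$, $x_{j+1}=Ax_j+Bw_j$ satisfies $x_j\in X$ for all $j=1,\dots,k$ and $x_k\in\Omega$. Let $\bar{Q}^x_N(\Omega,U,X)=\mathrm{co}\big(\bigcup_{k=1}^N Q^x_k(\Omega,U,X)\big)$. Set $\bar n=n+Nm$ and $$\bar G=\begin{bmatrix} HA^N & HB & HAB & \cdots & HA^{N-1}B\\ 0 & G & 0 & \cdots & 0\\ 0 & 0 & G & \cdots & 0\\ \vdots & & & \ddots & \vdots\\ 0 & 0 & 0 & \cdots & G\\ FA^N & FB & FAB & \cdots & FA^{N-1}B\\ FA^{N-1} & 0 & FB & \cdots & FA^{N-2}B\\ \vdots & & & & \vdots\\ FA & 0 & 0 & \cdots & FB\\ F & 0 & 0 & \cdots & 0 \end{bmatrix},\qquad \bar g=\begin{bmatrix}h\\ g\\ \vdots\\ g\\ f\\ \vdots\\ f\end{bmatrix},\qquad \bar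 H=\begin{bmatrix}H & 0&\cdots&0\end{bmatrix}\in\mathbb{R}^{n_h\times\bar n}.$$ Here the columns of $\bar G$ are split into blocks of widths $n,m,\dots,m$ (one state block followed by $N$ input blocks indexed $i=1,\dots,N$); the $G$-rows consist of $N$ block rows, the $i$-th having $G$ in input block $i$; the $F$-rows consist of $N+1$ block rows, namely for $j=N,N-1,\dots,1$ a block row with $FA^j$ in the state block and, in input block $i$, $FA^{i-1-(N-j)}B$ if $i\geq N-j+1$ and $0$ otherwise, followed by the block row $[F\ 0\ \cdots\ 0]$. Correspondingly $\bar g$ consists of $h$, then $g$ repeated $N$ times, then $f$ repeated $N+1$ times, and $n_{\bar g}=n_h+Nn_g+(N+1)n_f$ is the number of rows of $\bar G$. If there exist a nonnegative (entrywise) matrix $T\in\mathbb{R}^{n_{\bar g}\times n_h}$ and $M\in\mathbb{R}^{\bar n\times\bar n}$ such that $$T\bar H=\bar G M,\qquad Th\leq\bar g,\qquad \begin{bmatrix}I&0&\cdots&0\end{bmatrix}=\begin{bmatrix}I&0&\cdots&0\end{bmatrix}M$$ (with $\begin{bmatrix}I&0&\cdots&0\end{bmatrix}\in\mathbb{R}^{n\times\bar n}$), then $\bar{Q}^x_N(\Omega,U,X)$ is a control invariant set for $x^+=Ax+Bu$ with input set $U$, and it is contained in $X$.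
   Context: A set $C\subseteq\mathbb{R}^n$ is control invariant for $x^+=Ax+Bu$ with input constraint $u\in U$ if for every $x\in C$ there exists $u\in U$ with $Ax+Bu\in C$. Vector inequalities are componentwise; $\mathrm{co}$ denotes convex hull. *)

From HB Require Import structures.
From mathcomp Require Import all_boot all_order all_algebra.
From mathcomp Require Import reals.
Set Implicit Arguments. Unset Strict Implicit. Unset Printing Implicit Defensive.
Import Order.TTheory GRing.Theory Num.Theory.
Local Open Scope ring_scope.

Section Defs.
Variable R : realType.

Definition lev (k : nat) (u v : 'cV[R]_k) : Prop := forall i, u i 0 <= v i 0.

Definition polyh (r d : nat) (P : 'M[R]_(r, d)) (p : 'cV[R]_r) (x : 'cV[R]_d) : Prop :=
  lev (P *m x) p.

Definition conv (d : nat) (S : 'cV[R]_d -> Prop) (x : 'cV[R]_d) : Prop :=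
  exists (p : nat) (lam : 'I_p -> R) (v : 'I_p -> 'cV[R]_d),
    (forall i, 0 <= lam i) /\ \sum_(i < p) lam i = 1 /\
    (forall i, S (v i)) /\ x = \sum_(i < p) lam i *: v i.

Definition control_invariant (n m : nat) (A : 'M[R]_n) (B : 'M[R]_(n, m))
  (U : 'cV[R]_m -> Prop) (C : 'cV[R]_n -> Prop) : Prop :=
  forall x, C x -> exists u, U u /\ C (A *m x + B *m u).

Fixpoint traj (n m : nat) (A : 'M[R]_n) (B : 'M[R]_(n, m)) (x : 'cV[R]_n)
  (w : nat -> 'cV[R]_m) (j : nat) : 'cV[R]_n :=
  match j with
  | 0 => x
  | j'.+1 => A *m traj A B x w j' + B *m w j'
  end.

Definition Qk (n m : nat) (A : 'M[R]_n) (B : 'M[R]_(n, m))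
  (Om : 'cV[R]_n -> Prop) (U : 'cV[R]_m -> Prop) (X : 'cV[R]_n -> Prop)
  (k : nat) (x : 'cV[R]_n) : Prop :=
  X x /\ exists w : nat -> 'cV[R]_m,
    (forall j, (j < k)%N -> U (w j)) /\
    (forall j, (1 <= j <= k)%N -> X (traj A B x w j)) /\
    Om (traj A B x w k).

Definition Qbar (n m : nat) (A : 'M[R]_n) (B : 'M[R]_(n, m))
  (Om : 'cV[R]_n -> Prop) (U : 'cV[R]_m -> Prop) (X : 'cV[R]_n -> Prop)
  (N : nat) : 'cV[R]_n -> Prop :=
  conv (fun x => exists k, (1 <= k <= N)%N /\ Qk A B Om U X k x).

End Defs.

Lemma ofs_lt (N m : nat) (k : 'I_(N * m)) : (k %% m < m)%N.
Proof.
move: k; case: m => [|m] k; last by rewrite ltn_mod.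
by case: k => k; rewrite muln0.
Qed.
Definition ofs (N m : nat) (k : 'I_(N * m)) : 'I_m := Ordinal (ofs_lt k).
Definition blk (N m : nat) (k : 'I_(N * m)) : nat := (k %/ m)%N.

Section Blocks.
Variable R : realType.
Variables (n m nh nf ng N : nat).
Variables (A : 'M[R]_n) (B : 'M[R]_(n, m)) (H : 'M[R]_(nh, n))
  (F : 'M[R]_(nf, n)) (G : 'M[R]_(ng, m)).

(* Columns: state block (width n), then N input blocks of width m,
   input block with 0-based index i (i.e. block i+1 of the paper).
   Rows: H-block row, N G-block rows (0-based q), N+1 F-block rows (0-based q,
   corresponding to j = N - q in the paper). *)
Definition Gbar : 'M[R]_(nh + N * ng + (N.+1) * nf, n + N * m) :=
  \matrix_(r, c)
    match split r with
    | inl r1 =>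
        match split r1 with
        | inl p =>
            match split c with
            | inl x => (H *m A ^+ N) p x
            | inr k => (H *m A ^+ (blk k) *m B) p (ofs k)
            end
        | inr t =>
            match split c with
            | inl _ => 0
            | inr k => if blk k == blk t then G (ofs t) (ofs k) else 0
            end
        end
    | inr t =>
        match split c with
        | inl x => (F *m A ^+ (N - blk t)) (ofs t) x
        | inr k => if (blk t <= blk k)%N
                   then (F *m A ^+ (blk k - blk t) *m B) (ofs t) (ofs k)
                   else 0
        end
    end.

Definition gbar (h : 'cV[R]_nh) (g : 'cV[R]_ng) (f : 'cV[R]_nf)
  : 'cV[R]_(nh + N * ng + (N.+1) * nf) :=
  col_mx (col_mx h (\col_(t < N * ng) g (ofs t) 0))
         (\col_(t < N.+1 * nf) f (ofs t) 0).

Definition Hbar : 'M[R]_(nh, n + N * m) := row_mx H 0.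

Definition Ibar : 'M[R]_(n, n + N * m) := row_mx 1%:M 0.

End Blocks.

From HB Require Import structures.
From mathcomp Require Import all_boot all_order all_algebra.
From mathcomp Require Import reals.
From mathcomp Require Import zify.
Set Implicit Arguments. Unset Strict Implicit. Unset Printing Implicit Defensive.
Import Order.TTheory GRing.Theory Num.Theory.
Local Open Scope ring_scope.

(* If [x; w] satisfies [Gbar [x; w] <= gbar], then x reaches Omega in N steps inside X
   using the inputs stored in w (in reverse order).  For y in Omega, the point
   M [y; 0] satisfies these constraints, because [Gbar M [y; 0] = T H y <= T h <= gbar]
   by nonnegativity of T, and its state part is y; hence Omega is contained in Q_N.
   Then every x in Q_(k+1) is steered into Q_k, and every x in Q_1 into Omega, so
   the union of the Q_k is control invariant; since U is convex and the dynamics are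
   linear, so is its convex hull, which lies in the convex set X. *)

Lemma split_lshift (p q : nat) (i : 'I_p) : split (lshift q i) = inl i.
Proof. exact: (unsplitK (inl _ i)). Qed.

Lemma split_rshift (p q : nat) (i : 'I_q) : split (rshift p i) = inr i.
Proof. exact: (unsplitK (inr _ i)). Qed.

Section BlockIndex.
Variables N m : nat.

Lemma block_index_lt (b : 'I_N) (a : 'I_m) : (b * m + a < N * m)%N.
Proof.
have := leq_mul (ltn_ord b) (leqnn m); rewrite mulSn.
have := ltn_ord a; lia.
Qed.

Definition block_index (b : 'I_N) (a : 'I_m) : 'I_(N * m) :=
  Ordinal (block_index_lt b a).

Lemma ofs_block_index b a : ofs (block_index b a) = a.
Proof. by apply: val_inj; rewrite /= modnMDl modn_small. Qed.

Lemma blk_block_index b a : blk (block_index b a) = b.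
Proof.
have m_gt0 : (0 < m)%N by case: a => a; case: m.
by rewrite /blk /= divnMDl // divn_small // addn0.
Qed.

Lemma blk_lt (k : 'I_(N * m)) : (blk k < N)%N.
Proof.
rewrite /blk; case: k => k /=; case: m => [|m'] hk; first by rewrite muln0 in hk.
by rewrite ltn_divLR.
Qed.

Lemma sum_blocks (V : nmodType) (E : 'I_(N * m) -> V) :
  \sum_(k < N * m) E k = \sum_(b < N) \sum_(a < m) E (block_index b a).
Proof.
rewrite pair_bigA (reindex (fun p : 'I_N * 'I_m => block_index p.1 p.2)) //=.
exists (fun k => (Ordinal (blk_lt k), ofs k)) => [[b a] _ | k _] /=.
  by congr pair; [apply: val_inj; exact: blk_block_index | exact: ofs_block_index].
by apply: val_inj; rewrite /= /blk -divn_eq.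
Qed.

End BlockIndex.

Section Trajectory.
Variable R : realType.
Variables (n m : nat) (A : 'M[R]_n) (B : 'M[R]_(n, m)).

Lemma traj_sum x w j :
  traj A B x w j = A ^+ j *m x + \sum_(i < j) A ^+ (j.-1 - i) *m B *m w i.
Proof.
have mulA_expr k : A *m A ^+ k = A ^+ k.+1 by rewrite exprS mulmxE.
elim: j => [|j IH] /=; first by rewrite expr0 mul1mx big_ord0 addr0.
rewrite IH mulmxDr mulmxA mulA_expr big_ord_recr /= subnn expr0 mul1mx addrA.
congr (_ + _ + _); rewrite mulmx_sumr; apply: eq_bigr => i _.
by rewrite !mulmxA mulA_expr; congr (_ ^+ _ *m _ *m _); have := ltn_ord i; lia.
Qed.

Lemma traj_shift x w j :
  traj A B x w j.+1 = traj A B (A *m x + B *m w 0%N) (fun i => w i.+1) j.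
Proof. by elim: j => [|j /= <-]. Qed.

End Trajectory.

Section GbarRows.
Variable R : realType.
Variables (n m nh nf ng N : nat).
Variables (A : 'M[R]_n) (B : 'M[R]_(n, m)) (H : 'M[R]_(nh, n))
  (F : 'M[R]_(nf, n)) (G : 'M[R]_(ng, m)).
Variables (x : 'cV[R]_n) (w : 'cV[R]_(N * m)).

Definition cblock (b : 'I_N) : 'cV[R]_m := \col_a w (block_index b a) 0.

Lemma Gbar_rowH p :
  (Gbar N A B H F G *m col_mx x w) (lshift _ (lshift _ p)) 0
  = (H *m (A ^+ N *m x + \sum_(b < N) A ^+ b *m B *m cblock b)) p 0.
Proof.
rewrite mxE big_split_ord /= mulmxDr mxE; congr (_ + _).
  under eq_bigr => i _ do rewrite mxE !split_lshift col_mxEu.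
  by rewrite mulmxA mxE.
under eq_bigr => i _ do rewrite mxE !split_lshift split_rshift col_mxEd.
rewrite sum_blocks mulmx_sumr summxE; apply: eq_bigr => b _.
rewrite !mulmxA mxE; apply: eq_bigr => a _.
by rewrite blk_block_index ofs_block_index; congr (_ * _); rewrite mxE.
Qed.

Lemma Gbar_rowG q a :
  (Gbar N A B H F G *m col_mx x w) (lshift _ (rshift _ (block_index q a))) 0
  = (G *m cblock q) a 0.
Proof.
rewrite mxE big_split_ord /=.
under eq_bigr => i _ do rewrite mxE split_lshift split_rshift split_lshift mul0r.
rewrite big1 // add0r.
under eq_bigr => i _ do rewrite mxE split_lshift split_rshift split_rshift col_mxEd.
rewrite sum_blocks mxE (bigD1 q) //= [X in _ + X]big1 ?addr0.
  apply: eq_bigr => c _.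
  by rewrite !blk_block_index eqxx !ofs_block_index mxE.
move=> b /negbTE nqb; apply: big1 => c _.
by rewrite !blk_block_index (inj_eq val_inj) nqb mul0r.
Qed.

Lemma Gbar_rowF (q : 'I_N.+1) a :
  (Gbar N A B H F G *m col_mx x w) (rshift _ (block_index q a)) 0
  = (F *m (A ^+ (N - q) *m x
       + \sum_(b < N | (q <= b)%N) A ^+ (b - q) *m B *m cblock b)) a 0.
Proof.
rewrite mxE big_split_ord /= mulmxDr mxE; congr (_ + _).
  under eq_bigr => i _ do
    rewrite mxE !split_rshift split_lshift col_mxEu blk_block_index ofs_block_index.
  by rewrite mulmxA mxE.
under eq_bigr => i _ do rewrite mxE !split_rshift col_mxEd.
rewrite sum_blocks mulmx_sumr summxE [RHS]big_mkcond /=; apply: eq_bigr => b _.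
rewrite !blk_block_index; case: ifP => qb; last first.
  by rewrite big1 // => c _; rewrite blk_block_index qb mul0r.
rewrite !mulmxA mxE; apply: eq_bigr => c _.
by rewrite !blk_block_index qb !ofs_block_index; congr (_ * _); rewrite mxE.
Qed.

End GbarRows.

Section Feasibility.
Variable R : realType.
Variables (n m nh nf ng N' : nat).
Variables (A : 'M[R]_n) (B : 'M[R]_(n, m)) (H : 'M[R]_(nh, n)) (h : 'cV[R]_nh)
  (F : 'M[R]_(nf, n)) (f : 'cV[R]_nf) (G : 'M[R]_(ng, m)) (g : 'cV[R]_ng).

Definition rev_inputs (w : 'cV[R]_(N'.+1 * m)) (j : nat) : 'cV[R]_m :=
  cblock w (inord (N' - j)).

Lemma traj_rev_inputs x w j : (j <= N'.+1)%N ->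
  traj A B x (rev_inputs w) j = A ^+ j *m x +
    \sum_(b < N'.+1 | (N'.+1 - j <= b)%N) A ^+ (b - (N'.+1 - j)) *m B *m cblock w b.
Proof.
move=> le_jN; rewrite traj_sum; congr (_ + _).
rewrite (big_ord_widen N'.+1 (fun i => A ^+ (j.-1 - i) *m B *m rev_inputs w i)) //.
rewrite [RHS](reindex_inj rev_ord_inj) /=; apply: eq_big => b.
  by have := ltn_ord b; lia.
move=> lt_bj; have lt_bN := ltn_ord b; rewrite /rev_inputs.
have -> : inord (N' - b) = rev_ord b by apply: val_inj; rewrite /= inordK; lia.
by congr (_ ^+ _ *m _ *m _); lia.
Qed.

Let Gb := Gbar N'.+1 A B H F G.
Let gb := gbar N'.+1 h g f.
Let QN := Qk A B (polyh H h) (polyh G g) (polyh F f) N'.+1.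

Lemma Gbar_feasible_QN x w : lev (Gb *m col_mx x w) gb -> QN x.
Proof.
move=> feas.
have trajX j : (j <= N'.+1)%N -> polyh F f (traj A B x (rev_inputs w) j).
  move=> le_jN a; have := feas (rshift _ (block_index (inord (N'.+1 - j)) a)).
  rewrite Gbar_rowF /gb /gbar col_mxEd mxE ofs_block_index inordK; last by lia.
  by rewrite subKn // -traj_rev_inputs.
split; first exact: (trajX 0%N).
exists (rev_inputs w); split; [|split].
- move=> j _ a; have := feas (lshift _ (rshift nh (block_index (inord (N' - j)) a))).
  by rewrite Gbar_rowG /gb /gbar col_mxEu col_mxEd mxE ofs_block_index.
- by move=> j /andP[_ le_jN]; apply: trajX.
- rewrite traj_rev_inputs // subnn => p.
  under eq_bigl do rewrite leq0n; under eq_bigr do rewrite subn0.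
  by have := feas (lshift _ (lshift _ p)); rewrite Gbar_rowH /gb /gbar !col_mxEu.
Qed.

Variables (T : 'M[R]_(nh + N'.+1 * ng + N'.+2 * nf, nh)) (M : 'M[R]_(n + N'.+1 * m)).
Hypotheses (T_ge0 : forall i j, 0 <= T i j) (THbar : T *m Hbar m N'.+1 H = Gb *m M).
Hypotheses (Th_le : lev (T *m h) gb) (Ibar_M : Ibar R n m N'.+1 = Ibar R n m N'.+1 *m M).

Lemma Om_sub_QN y : polyh H h y -> QN y.
Proof.
move=> Om_y; set v := M *m col_mx y 0.
have feas : lev (Gb *m v) gb.
  move=> i; rewrite /v mulmxA -THbar -mulmxA /Hbar mul_row_col mul0mx addr0.
  apply: le_trans (Th_le i); rewrite !mxE; apply: ler_sum => j _.
  by apply: ler_wpM2l; [exact: T_ge0 | exact: Om_y].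
have Ibar_v : Ibar R n m N'.+1 *m v = y.
  by rewrite /v mulmxA -Ibar_M /Ibar mul_row_col mul1mx mul0mx addr0.
have v_state : v = col_mx y (dsubmx v).
  rewrite -{1}(vsubmxK v) -Ibar_v; congr col_mx.
  by rewrite -{2}(vsubmxK v) /Ibar mul_row_col mul1mx mul0mx addr0.
by apply: (@Gbar_feasible_QN y (dsubmx v)); rewrite -v_state.
Qed.

End Feasibility.

Section Convexity.
Variable R : realType.

Lemma sub_conv d (S S' : 'cV[R]_d -> Prop) x :
  (forall y, S y -> S' y) -> conv S x -> conv S' x.
Proof.
move=> sub_SS' [p [lam [v [lam_ge0 [lam_sum [Sv ->]]]]]].
by exists p, lam, v; split; [|split; [|split => // i; apply/sub_SS'/Sv]].
Qed.

Lemma conv_polyh r d (P : 'M[R]_(r, d)) (p : 'cV[R]_r) x :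
  conv (polyh P p) x -> polyh P p x.
Proof.
move=> [k [lam [v [lam_ge0 [lam_sum [Pv ->]]]]]] a.
rewrite mulmx_sumr summxE.
under eq_bigr => i _ do rewrite -scalemxAr mxE.
apply: (@le_trans _ _ (\sum_(i < k) lam i * p a 0)).
  by apply: ler_sum => i _; apply: ler_wpM2l; [exact: lam_ge0 | exact: Pv].
by rewrite -mulr_suml lam_sum mul1r.
Qed.

End Convexity.

Section ControlInvariance.
Variable R : realType.
Variables (n m : nat) (A : 'M[R]_n) (B : 'M[R]_(n, m)).
Variables (Om : 'cV[R]_n -> Prop) (U : 'cV[R]_m -> Prop) (X : 'cV[R]_n -> Prop).

Let Q := Qk A B Om U X.

Lemma Q1_step x : Q 1 x -> exists u, U u /\ Om (A *m x + B *m u).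
Proof. by move=> [_ [w [Uw [_ Om_w]]]]; exists (w 0%N); split; first exact: Uw. Qed.

Lemma Qk_succ_step k x : Q k.+2 x -> exists u, U u /\ Q k.+1 (A *m x + B *m u).
Proof.
move=> [_ [w [Uw [Xw Om_w]]]]; exists (w 0%N); split; first exact: Uw.
split; first exact: (Xw 1%N).
exists (fun i => w i.+1); split; [|split].
- by move=> j lt_jk; apply: Uw.
- by move=> j /andP[_ le_jk]; rewrite -traj_shift; apply: Xw.
- by rewrite -traj_shift.
Qed.

Lemma Qunion_control_invariant N : (forall y, Om y -> Q N y) ->
  control_invariant A B U (fun x => exists k, (1 <= k <= N)%N /\ Q k x).
Proof.
move=> Om_QN x [k [/andP[k_gt0 le_kN] Qx]].
case: k k_gt0 le_kN Qx => [//|[|k]] _ le_kN Qx.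
  have [u [Uu Om_u]] := Q1_step Qx.
  by exists u; split => //; exists N; rewrite le_kN leqnn; split => //; apply: Om_QN.
have [u [Uu Q_u]] := Qk_succ_step Qx.
by exists u; split => //; exists k.+1; rewrite (ltnW le_kN).
Qed.

Lemma conv_control_invariant (C : 'cV[R]_n -> Prop) :
  (forall u, conv U u -> U u) ->
  control_invariant A B U C -> control_invariant A B U (conv C).
Proof.
move=> U_convex C_inv x [p [lam [v [lam_ge0 [lam_sum [Cv ->]]]]]].
have /fin_all_exists [u Cu] : forall i : 'I_p, exists u, U u /\ C (A *m v i + B *m u).
  by move=> i; apply: C_inv.
exists (\sum_(i < p) lam i *: u i); split.
  by apply: U_convex; exists p, lam, u; split; [|split; [|split => // i; case: (Cu i)]].
exists p, lam, (fun i => A *m v i + B *m u i); split; [|split; [|split]] => //.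
  by move=> i; case: (Cu i).
rewrite !mulmx_sumr -big_split; apply: eq_bigr => i _.
by rewrite scalerDr !scalemxAr.
Qed.

End ControlInvariance.

Theorem theorem2 (R : realType) (n m N nh nf ng : nat)
  (A : 'M[R]_n) (B : 'M[R]_(n, m))
  (H : 'M[R]_(nh, n)) (h : 'cV[R]_nh)
  (F : 'M[R]_(nf, n)) (f : 'cV[R]_nf)
  (G : 'M[R]_(ng, m)) (g : 'cV[R]_ng)
  (hN : (1 <= N)%N)
  (h0Om : polyh H h 0) (h0X : polyh F f 0) (h0U : polyh G g 0)
  (T : 'M[R]_(nh + N * ng + (N.+1) * nf, nh))
  (M : 'M[R]_(n + N * m))
  (hTnn : forall i j, 0 <= T i j)
  (hTH : T *m Hbar m N H = Gbar N A B H F G *m M)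
  (hTh : lev (T *m h) (gbar N h g f))
  (hI : Ibar R n m N = Ibar R n m N *m M) :
  control_invariant A B (polyh G g) (Qbar A B (polyh H h) (polyh G g) (polyh F f) N)
  /\ (forall x, Qbar A B (polyh H h) (polyh G g) (polyh F f) N x -> polyh F f x).
Proof.
have Om_QN : forall y, polyh H h y -> Qk A B (polyh H h) (polyh G g) (polyh F f) N y.
  by case: N hN T M hTnn hTH hTh hI => // N' _ T M; exact: Om_sub_QN.
split.
  apply: conv_control_invariant; first exact: conv_polyh.
  exact: Qunion_control_invariant.
move=> x Qbar_x; apply/conv_polyh/(sub_conv _ Qbar_x).
by move=> y [k [_ []]].
Qed.
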